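(* Let $q\in L_1[0,\pi]$ with $C_0=0$ and suppose $q\in E$, i.e. $C_n=O(1/n)$ as $n\to\infty$. Then $S_1(n,q)=O(n^{-2})$ as $n\to\infty$, where \[ S_1(n,q)=\sum_{\substack{k,l\in\mathbb{Z}\\ k,\,k+l\neq0,-2n}}\frac{C_kC_lC_{-k-l}}{k(k+l)} . \]
   Context: $q$ is a complex-valued summable function on $[0,\pi]$; $C_k=\frac{1}{\pi}\int_0^\pi q(x)\cos kx\,dx$ for $k\in\mathbb{Z}$ (so $C_{-k}=C_k$), and it is assumed that $C_0=0$. $E$ is the set of such $q$ with $C_n=O(1/n)$ as $n\to\infty$. $n$ is a positive integer. *)

From mathcomp Require Import all_boot all_algebra.
From mathcomp Require Import complex.
From mathcomp Require Import all_classical all_reals all_analysis.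
Import GRing.Theory Num.Theory ComplexField numFieldNormedType.Exports.
Set Implicit Arguments. Unset Strict Implicit. Unset Printing Implicit Defensive.
Local Open Scope ring_scope.
Local Open Scope complex_scope.
Local Open Scope classical_set_scope.

(* A complex-valued function q on [0,pi] is given by its real part qr and
   imaginary part qi : R -> R.  q in L_1[0,pi] means both are Lebesgue
   integrable on [0,pi]. *)
Definition L1_0pi (R : realType) (f : R -> R) : Prop :=
  (lebesgue_measure : set R -> \bar R).-integrable `[0, pi]%classic (EFin \o f).

Definition Ccoef (R : realType) (qr qi : R -> R) (k : int) : R[i] :=
  ((pi^-1 * Rintegral (lebesgue_measure : set R -> \bar R) `[0, pi]%classic
             (fun x => qr x * cos (k%:~R * x)))
   +i* (pi^-1 * Rintegral (lebesgue_measure : set R -> \bar R) `[0, pi]%classic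
             (fun x => qi x * cos (k%:~R * x)))).

Definition S1_term (R : realType) (qr qi : R -> R) (n : nat) (k l : int) : R[i] :=
  if (k != 0) && (k != - (2 * n)%:Z) && (k + l != 0) && (k + l != - (2 * n)%:Z)
  then Ccoef qr qi k * Ccoef qr qi l * Ccoef qr qi (- k - l) / ((k * (k + l))%:~R)
  else 0.

Definition S1_partial (R : realType) (qr qi : R -> R) (n N : nat) : R[i] :=
  \sum_(i < (2 * N).+1) \sum_(j < (2 * N).+1)
     S1_term qr qi n (i%:Z - N%:Z) (j%:Z - N%:Z).

Definition S1 (R : realType) (qr qi : R -> R) (n : nat) : R[i] :=
  (lim ((fun N => (complex.Re (S1_partial qr qi n N) : R)) @ \oo))
  +i* (lim ((fun N => (complex.Im (S1_partial qr qi n N) : R)) @ \oo)).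

From mathcomp Require Import all_boot all_order all_algebra.
From mathcomp Require Import complex.
From mathcomp Require Import all_classical all_reals all_analysis.
From mathcomp Require Import zify ring lra.
Import Order.TTheory GRing.Theory Num.Theory ComplexField numFieldNormedType.Exports.
Local Open Scope ring_scope.
Local Open Scope complex_scope.
Local Open Scope classical_set_scope.

(* The summand F(k,l) = C_k C_l C_{-k-l} / (k (k+l)) satisfies F(k,l) + F(l,k) + F(k,-k-l) = 0,
   since C is even and 1/(k(k+l)) + 1/(l(k+l)) = 1/(kl).  The hexagon |k|, |l|, |k+l| <= N is
   stable under (k,l) |-> (l,k) and (k,l) |-> (k,-k-l), so the sum of F over it vanishes.
   From |C_k| <= A/|k| we get |F(k,l)| <= A^3 / (k^2 (k+l)^2 |l|), and the sum of this bound over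
   the rest of the square |k|, |l| <= N is O(1/N); hence the square partial sums of F tend to 0
   and form a Cauchy sequence.  The partial sums of S_1(n,q) differ from them only by the terms
   with k = -2n or k+l = -2n, whose total is at most 8 A^3 / (2n)^2. *)

Definition zrange (N : nat) : seq int := [seq i%:Z - N%:Z | i <- iota 0 (2 * N).+1].

Lemma mem_zrange N k : (k \in zrange N) = (absz k <= N)%N.
Proof.
apply/mapP/idP => [[j] | kN]; first by rewrite mem_iota => ? ->; lia.
by exists (absz (k + N%:Z)); rewrite ?mem_iota; lia.
Qed.

Lemma zrange_uniq N : uniq (zrange N).
Proof. by rewrite map_inj_uniq ?iota_uniq // => i j /addIr []. Qed.

Lemma big_zrange_le {V : nmodType} [N N' : nat] (F : int -> V) : (N <= N')%N ->
  \sum_(k <- zrange N) F k = \sum_(k <- zrange N' | (absz k <= N)%N) F k.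
Proof.
move=> NN'; rewrite -[RHS]big_filter; apply/perm_big/uniq_perm.
- exact: zrange_uniq.
- by rewrite filter_uniq ?zrange_uniq.
by move=> k; rewrite mem_filter !mem_zrange; apply/idP/andP => [|[]//]; split=> //; lia.
Qed.

Lemma sum_zrange_sub (V : zmodType) N N' (f : int -> int -> V) : (N <= N')%N ->
  \sum_(k <- zrange N') \sum_(l <- zrange N') f k l
    - \sum_(k <- zrange N) \sum_(l <- zrange N) f k l =
  \sum_(k <- zrange N') \sum_(l <- zrange N' | ~~ ((absz k <= N) && (absz l <= N))%N) f k l.
Proof.
move=> NN'; rewrite (big_zrange_le _ NN') [X in _ - X]big_mkcond -sumrB.
apply: eq_bigr => k _; rewrite (big_zrange_le _ NN') [in RHS]big_mkcond.
case: (absz k <= N)%N; last by rewrite subr0; apply: eq_bigr.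
by rewrite [X in _ - X]big_mkcond -sumrB; apply: eq_bigr => l _; case: ifP; rewrite ?subrr ?subr0.
Qed.

Lemma uniq_sub_ler_sum [R : numDomainType] [T : eqType] [f : T -> R] (s1 s2 : seq T) :
  (forall x, 0 <= f x) -> uniq s1 -> uniq s2 -> {subset s1 <= s2} ->
  \sum_(x <- s1) f x <= \sum_(x <- s2) f x.
Proof.
move=> f0 u1 u2 s12; rewrite [leRHS](bigID (mem s1)) /= -[X in X + _]big_filter.
have -> : \sum_(x <- [seq x <- s2 | x \in s1]) f x = \sum_(x <- s1) f x.
  apply/perm_big/uniq_perm; rewrite ?filter_uniq // => x.
  by rewrite mem_filter; apply/andP/idP => [ []// | xs1]; split=> //; apply: s12.
by rewrite lerDl sumr_ge0.
Qed.

Lemma sum_mul_indicator (R : pzSemiRingType) (T : Type) (s : seq T) (q : pred T) (g : T -> R) :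
  \sum_(x <- s) g x * (q x)%:R = \sum_(x <- s | q x) g x.
Proof. by rewrite [RHS]big_mkcond; apply: eq_bigr => x _; rewrite mulr_natr mulrb. Qed.

Section InverseSquareSums.
Variable R : realFieldType.

(* [invz 0 = 0], so a bound [`|c k| <= A * invz k] forces [c 0 = 0]. *)
Definition invz (k : int) : R := (absz k)%:R^-1.
Definition invz2 (k : int) : R := invz k ^+ 2.

Lemma invz_ge0 k : 0 <= invz k. Proof. by rewrite invr_ge0 ler0n. Qed.
Lemma invz2_ge0 k : 0 <= invz2 k. Proof. by rewrite exprn_ge0 ?invz_ge0. Qed.
Lemma invzN k : invz (- k) = invz k. Proof. by rewrite /invz abszN. Qed.
Lemma invz2N k : invz2 (- k) = invz2 k. Proof. by rewrite /invz2 invzN. Qed.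
Lemma invzM k l : invz (k * l) = invz k * invz l.
Proof. by rewrite /invz abszM natrM invfM. Qed.

Lemma invz_le1 k : invz k <= 1.
Proof. by rewrite /invz; case: (absz k) => [|m]; rewrite ?invr0 // invf_le1 ?ler1n. Qed.

Lemma invz_tail N k : (N < absz k)%N -> invz k <= N.+1%:R^-1.
Proof. by move=> Nk; rewrite lef_pV2 ?posrE ?ltr0n ?ler_nat //; lia. Qed.

Lemma sum_invz2_iota a K : (0 < a)%N -> \sum_(i <- iota a K) invz2 i%:Z <= 2 / a%:R.
Proof.
suff tele : (0 < a)%N -> \sum_(i <- iota a K) invz2 i%:Z + 2 / (a + K)%:R <= 2 / a%:R.
  by move=> a0; apply: le_trans (tele a0); rewrite lerDl divr_ge0 ?ler0n.
elim: K a => [|K IH] a a0; first by rewrite big_nil add0r addn0.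
rewrite /= big_cons -addrA -addSnnS; apply: le_trans (lerD (lexx _) (IH a.+1 isT)) _.
have a1 : 1 <= a%:R :> R by rewrite ler1n.
have an0 : a%:R != 0 :> R by rewrite pnatr_eq0 -lt0n.
have aS0 : a%:R + 1 != 0 :> R by rewrite natr1 pnatr_eq0.
have -> : invz2 a%:Z + 2 / a.+1%:R = 2 / a%:R - (a%:R - 1) / (a%:R ^+ 2 * a.+1%:R).
  by rewrite /invz2 /invz /= -natr1; field; rewrite addrC aS0 an0.
by rewrite gerBl divr_ge0 ?subr_ge0 ?mulr_ge0 ?exprn_ge0 ?ler0n.
Qed.

Definition invz2_sum_bounded (p : pred int) (b : R) : Prop :=
  forall t : seq int, uniq t -> \sum_(m <- t | p m) invz2 m <= b.

Lemma invz2_sum_bounded_tail N :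
  invz2_sum_bounded (fun m => N < absz m)%N (4 / N.+1%:R).
Proof.
move=> t ut; set K := (\sum_(m <- t) absz m)%N.
pose pos := [seq i%:Z | i <- iota N.+1 K]; pose neg := [seq - i%:Z | i <- iota N.+1 K].
apply: (@le_trans _ _ (\sum_(m <- pos ++ neg) invz2 m)).
  rewrite -big_filter; apply: uniq_sub_ler_sum; rewrite ?filter_uniq //; first exact: invz2_ge0.
    rewrite cat_uniq !map_inj_uniq ?iota_uniq => [|i j /oppr_inj []|i j []] //.
    rewrite andbT; apply/hasPn => _ /mapP [i Hi ->]; apply/negP => /mapP [j Hj].
    by move: Hi Hj; rewrite !mem_iota; lia.
  move=> m; rewrite mem_filter => /andP [Nm mt].
  have mK : (absz m <= K)%N by rewrite /K (bigD1_seq m) //= leq_addr.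
  by rewrite mem_cat; apply/orP; case: (lerP 0 m) => m0; [left|right];
    apply/mapP; exists (absz m); rewrite ?mem_iota; lia.
rewrite big_cat !big_map; under [X in _ + X <= _]eq_bigr => i _ do rewrite invz2N.
have sumK := sum_invz2_iota N.+1 K (ltn0Sn N).
by apply: le_trans (lerD sumK sumK) _; rewrite -mulrDl -natrD.
Qed.

Lemma invz2_sum_bounded_all : invz2_sum_bounded xpredT 4.
Proof.
move=> t ut; have := invz2_sum_bounded_tail 0 t ut; rewrite divr1; apply: le_trans.
rewrite [leLHS](bigID (fun m => 0 < absz m)%N) /= [X in _ + X]big1 ?addr0 // => m.
by rewrite -leqNgt leqn0 absz_eq0 => /eqP ->; rewrite /invz2 /invz invr0 expr0n.
Qed.

Lemma invz2_sum_bounded_pred1 a : invz2_sum_bounded (pred1 a) (invz2 a).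
Proof.
move=> t ut; have -> : invz2 a = \sum_(m <- [:: a]) invz2 m by rewrite big_seq1.
rewrite -big_filter.
apply: uniq_sub_ler_sum; rewrite ?filter_uniq //; first exact: invz2_ge0.
by move=> x; rewrite mem_filter inE => /andP [].
Qed.

Lemma invz2_convolution_le (s : seq int) (p1 p2 : pred int) a b :
  uniq s -> invz2_sum_bounded p1 a -> invz2_sum_bounded p2 b -> 0 <= b ->
  \sum_(k <- s | p1 k) \sum_(l <- s | p2 (k + l)) invz2 k * invz2 (k + l) <= a * b.
Proof.
move=> us Ha Hb b0; apply: (@le_trans _ _ (\sum_(k <- s | p1 k) invz2 k * b)).
  apply: ler_sum => k _; rewrite -mulr_sumr ler_wpM2l ?invz2_ge0 //.
  rewrite -(big_map (fun l => k + l) p2 invz2); apply: Hb.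
  by rewrite map_inj_uniq // => x y /addrI.
by rewrite -mulr_suml ler_wpM2r // Ha.
Qed.

Lemma invz2_convolution_split (s : seq int) (w1 w2 : int -> int -> R) :
  \sum_(k <- s) \sum_(l <- s) invz2 k * invz2 (k + l) * (w1 k l + w2 k l) =
  \sum_(k <- s) \sum_(l <- s) invz2 k * invz2 (k + l) * w1 k l
  + \sum_(k <- s) \sum_(l <- s) invz2 k * invz2 (k + l) * w2 k l.
Proof.
rewrite -big_split; apply: eq_bigr => k _.
by rewrite -big_split; apply: eq_bigr => l _; rewrite mulrDr.
Qed.

Lemma invz2_convolution_tail_le (s : seq int) N : uniq s ->
  \sum_(k <- s) \sum_(l <- s) invz2 k * invz2 (k + l) * ((N < absz k)%N%:R + N.+1%:R^-1)
  <= 32 / N.+1%:R.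
Proof.
move=> us; rewrite invz2_convolution_split.
rewrite (_ : 32 / _ = 4 / N.+1%:R * 4 + 4 * 4 * N.+1%:R^-1); last first.
  by rewrite mulrAC -mulrDl -!natrM -natrD.
apply: lerD.
  under eq_bigr => k _ do rewrite -mulr_suml.
  rewrite sum_mul_indicator; apply: (invz2_convolution_le _ _ xpredT) => //.
  - exact: invz2_sum_bounded_tail.
  - exact: invz2_sum_bounded_all.
under eq_bigr => k _ do rewrite -mulr_suml.
rewrite -mulr_suml ler_wpM2r ?invr_ge0 ?ler0n //.
by apply: (invz2_convolution_le _ xpredT xpredT) => //;
  exact: invz2_sum_bounded_all.
Qed.

Lemma invz2_convolution_at_le (s : seq int) a : uniq s ->
  \sum_(k <- s) \sum_(l <- s) invz2 k * invz2 (k + l) * ((k == a)%:R + (k + l == a)%:R)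
  <= 8 * invz2 a.
Proof.
move=> us; rewrite invz2_convolution_split.
rewrite (_ : 8 * _ = invz2 a * 4 + 4 * invz2 a); last by rewrite [invz2 a * 4]mulrC -mulrDl -natrD.
apply: lerD.
  under eq_bigr => k _ do rewrite -mulr_suml.
  rewrite sum_mul_indicator; apply: (invz2_convolution_le _ _ xpredT) => //.
  - exact: invz2_sum_bounded_pred1.
  - exact: invz2_sum_bounded_all.
under eq_bigr => k _ do rewrite sum_mul_indicator.
apply: (invz2_convolution_le _ xpredT (pred1 a)) => //.
- exact: invz2_sum_bounded_all.
- exact: invz2_sum_bounded_pred1.
- exact: invz2_ge0.
Qed.

End InverseSquareSums.

Lemma ler_norm_double_sum [R : rcfType] [s : seq int] [P : int -> int -> bool]
    [f : int -> int -> R[i]] (b : int -> int -> R) :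
  (forall k l, P k l -> `|f k l| <= (b k l)%:C) ->
  `|\sum_(k <- s) \sum_(l <- s | P k l) f k l| <= (\sum_(k <- s) \sum_(l <- s | P k l) b k l)%:C.
Proof.
move=> fb; apply: le_trans (ler_norm_sum _ _ _) _; rewrite rmorph_sum; apply: ler_sum => k _.
by apply: le_trans (ler_norm_sum _ _ _) _; rewrite rmorph_sum; apply: ler_sum => l /fb.
Qed.

Lemma cycle_identity (F : fieldType) (a x y : F) : x != 0 -> y != 0 -> x + y != 0 ->
  a / (x * (x + y)) + a / (y * (x + y)) + a / (x * - y) = 0.
Proof. by move=> x0 y0 xy0; field; rewrite oppr_eq0 x0 y0 xy0. Qed.

Section EvenCoefficients.
Context {R : rcfType}.
Variables (c : int -> R[i]) (A : R).
Hypothesis cN : forall k, c (- k) = c k.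
Hypothesis cA : forall k, `|c k| <= (A * invz R k)%:C.

Lemma coef0 : c 0 = 0.
Proof. by apply/eqP; rewrite -normr_le0; have := cA 0; rewrite /invz invr0 mulr0. Qed.

Lemma coef_bound_ge0 : 0 <= A.
Proof.
rewrite -lecR; apply: le_trans (normr_ge0 (c 1)) _.
by have := cA 1; rewrite /invz invr1 mulr1.
Qed.

Definition cterm (k l : int) : R[i] := c k * c l * c (- k - l) / ((k * (k + l))%:~R).

Lemma norm_intrV (z : int) : `|(z%:~R : R[i])^-1| = (invz R z)%:C.
Proof. by rewrite normfV -intr_norm -abszE /invz fmorphV rmorph_nat. Qed.

Lemma norm_cterm_le k l w : invz R l <= w ->
  `|cterm k l| <= (A ^+ 3 * (invz2 R k * invz2 R (k + l) * w))%:C.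
Proof.
move=> lw; rewrite /cterm !normrM norm_intrV -opprD cN invzM.
have -> : (A ^+ 3 * (invz2 R k * invz2 R (k + l) * w))%:C =
    (A * invz R k)%:C * (A * w)%:C * (A * invz R (k + l))%:C
    * (invz R k * invz R (k + l))%:C.
  by rewrite -!rmorphM /invz2; congr _%:C; ring.
have Aw : (A * invz R l)%:C <= (A * w)%:C by rewrite lecR ler_wpM2l ?coef_bound_ge0.
apply: (@ler_pM _ (`|c k| * `|c l| * `|c (k + l)|));
  rewrite ?ler0c ?mulr_ge0 ?normr_ge0 ?invz_ge0 //.
apply: (@ler_pM _ (`|c k| * `|c l|)); rewrite ?mulr_ge0 ?normr_ge0 ?cA //.
by apply: (@ler_pM _ `|c k|); rewrite ?normr_ge0 ?cA // (le_trans (cA l)).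
Qed.

Lemma cterm_cycle k l : cterm k l + cterm l k + cterm k (- k - l) = 0.
Proof.
have e1 : - l - k = - k - l by ring.
have e2 : - k - (- k - l) = l by ring.
rewrite /cterm e1 e2.
have [-> | k0] := eqVneq k 0; first by rewrite coef0 !(mul0r, mulr0, add0r).
have [-> | l0] := eqVneq l 0; first by rewrite coef0 !(mulr0, mul0r, add0r, addr0).
have [kl0 | kl0] := eqVneq (k + l) 0.
  by rewrite -opprD kl0 oppr0 coef0 !(mulr0, mul0r, addr0).
rewrite (addrC l) (_ : k + (- k - l) = - l); last by ring.
have nz (z : int) : z != 0 -> (z%:~R : R[i]) != 0 by rewrite intr_eq0.
move: (nz _ k0) (nz _ l0) (nz _ kl0); rewrite !intrM !intrD !intrN => hk hl hkl.
by rewrite [c l * c k]mulrC [c k * c (- k - l) * c l]mulrAC; apply: cycle_identity.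
Qed.

Lemma hexagon_sum_cterm N :
  \sum_(k <- zrange N) \sum_(l <- zrange N | (absz (k + l)%R <= N)%N) cterm k l = 0.
Proof.
set s := zrange N; set S := \sum_(k <- s) _.
have swapE : \sum_(k <- s) \sum_(l <- s | (absz (k + l)%R <= N)%N) cterm l k = S.
  under eq_bigr do rewrite big_mkcond; rewrite exchange_big /=.
  apply: eq_bigr => k _; rewrite [RHS]big_mkcond; apply: eq_bigr => l _.
  by rewrite addrC.
have reflE : \sum_(k <- s) \sum_(l <- s | (absz (k + l)%R <= N)%N) cterm k (- k - l) = S.
  apply: eq_bigr => k _; rewrite -big_filter -[RHS]big_filter.
  rewrite -(big_map (fun l : int => - k - l) xpredT (cterm k)); apply/perm_big/uniq_perm.
  - by rewrite map_inj_uniq ?filter_uniq ?zrange_uniq // => x y /addrI /oppr_inj.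
  - by rewrite filter_uniq ?zrange_uniq.
  move=> m; rewrite mem_filter mem_zrange; apply/mapP/andP => [[l] | [km mN]].
    by rewrite mem_filter mem_zrange => /andP [kl lN] ->; split; lia.
  by exists (- k - m); rewrite ?mem_filter ?mem_zrange; [apply/andP; split; lia | ring].
have S3 : S + S + S = 0.
  rewrite -{2}swapE -{2}reflE /S -!big_split /= big1 // => k _.
  by rewrite -!big_split big1 // => l _; rewrite /= cterm_cycle.
have : 3%:R * S = 0 by rewrite -S3; ring.
by move/eqP; rewrite mulf_eq0 pnatr_eq0 => /eqP.
Qed.


Lemma norm_square_sum_cterm_le N :
  `|\sum_(k <- zrange N) \sum_(l <- zrange N) cterm k l| <= (A ^+ 3 * 16 / N.+1%:R)%:C.
Proof.
have -> : \sum_(k <- zrange N) \sum_(l <- zrange N) cterm k l =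
    \sum_(k <- zrange N) \sum_(l <- zrange N | (absz (k + l)%R <= N)%N) cterm k l
    + \sum_(k <- zrange N) \sum_(l <- zrange N | (N < absz (k + l)%R)%N) cterm k l.
  rewrite -big_split; apply: eq_bigr => k _; rewrite (bigID (fun l => absz (k + l)%R <= N)%N).
  by congr (_ + _); apply: eq_bigl => l; rewrite -ltnNge.
rewrite hexagon_sum_cterm add0r.
apply: le_trans (ler_norm_double_sum (fun k l => A ^+ 3 * (invz2 R k * invz2 R (k + l) * 1)) _) _.
  by move=> k l _; apply: norm_cterm_le; apply: invz_le1.
rewrite lecR; under eq_bigr => k _ do under eq_bigr => l _ do rewrite mulr1.
under eq_bigr => k _ do rewrite -mulr_sumr; rewrite -mulr_sumr -mulrA ler_wpM2l ?exprn_ge0 ?coef_bound_ge0 //.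
rewrite (_ : 16 / N.+1%:R = 4 * (4 / N.+1%:R)); last by rewrite mulrA -natrM.
apply: (invz2_convolution_le _ _ xpredT (fun m => N < absz m)%N) => //.
- exact: zrange_uniq.
- exact: invz2_sum_bounded_all.
- exact: invz2_sum_bounded_tail.
Qed.

Definition cterm_excl (n : nat) (k l : int) : R[i] :=
  if (k != 0) && (k != - (2 * n)%:Z) && (k + l != 0) && (k + l != - (2 * n)%:Z)
  then cterm k l else 0.

Definition cterm_removed (n : nat) (k l : int) : R[i] :=
  if (k == - (2 * n)%:Z) || (k + l == - (2 * n)%:Z) then cterm k l else 0.

Lemma cterm_exclE n k l : cterm_excl n k l = cterm k l - cterm_removed n k l.
Proof.
rewrite /cterm_excl /cterm_removed.
have cterm0 : k * (k + l) = 0 -> cterm k l = 0 by rewrite /cterm => ->; rewrite invr0 mulr0.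
have [k0 | k0] := eqVneq k 0; first by rewrite cterm0 ?if_same ?subrr // k0 mul0r.
have [kl0 | kl0] := eqVneq (k + l) 0; first by rewrite cterm0 ?if_same ?subrr // kl0 mulr0.
rewrite /=; case: (k =P _) => [_ | _] /=; first by rewrite subrr.
by case: (k + l =P _) => [_ | _] /=; rewrite ?subrr ?subr0.
Qed.

Lemma norm_removed_sum_le n N :
  `|\sum_(k <- zrange N) \sum_(l <- zrange N) cterm_removed n k l|
  <= (A ^+ 3 * 8 * invz2 R (2 * n)%:Z)%:C.
Proof.
set a := - (2 * n)%:Z; pose w k l : R := (k == a)%:R + (k + l == a)%:R.
apply: le_trans (ler_norm_double_sum (fun k l => A ^+ 3 * (invz2 R k * invz2 R (k + l) * w k l)) _) _.
  move=> k l _; rewrite /cterm_removed -/a.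
  case: ifP => [ka | _]; last first.
    by rewrite normr0 ler0c !mulr_ge0 ?exprn_ge0 ?coef_bound_ge0 ?invz_ge0 ?addr_ge0.
  apply: norm_cterm_le; apply: le_trans (invz_le1 _ _) _.
  by move: ka; rewrite /w; case: (k == a); case: (k + l == a); rewrite //= -natrD ler1n.
rewrite lecR; under eq_bigr => k _ do rewrite -mulr_sumr; rewrite -mulr_sumr -[leRHS]mulrA.
rewrite ler_wpM2l ?exprn_ge0 ?coef_bound_ge0 // -(invz2N _ (2 * n)%:Z) -/a.
exact: invz2_convolution_at_le (zrange_uniq N).
Qed.

Definition partial_sum (n N : nat) : R[i] :=
  \sum_(k <- zrange N) \sum_(l <- zrange N) cterm_excl n k l.

Lemma norm_partial_sum_le n N :
  `|partial_sum n N| <= (A ^+ 3 * 8 * invz2 R (2 * n)%:Z + A ^+ 3 * 16 / N.+1%:R)%:C.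
Proof.
have -> : partial_sum n N = \sum_(k <- zrange N) \sum_(l <- zrange N) cterm k l
    - \sum_(k <- zrange N) \sum_(l <- zrange N) cterm_removed n k l.
  rewrite /partial_sum -sumrB; apply: eq_bigr => k _.
  by rewrite -sumrB; apply: eq_bigr => l _; apply: cterm_exclE.
rewrite rmorphD [leRHS]addrC; apply: le_trans (ler_normB _ _) _.
by apply: lerD; [apply: norm_square_sum_cterm_le | apply: norm_removed_sum_le].
Qed.

Lemma norm_partial_sum_sub_le n N N' : (N <= N')%N ->
  `|partial_sum n N' - partial_sum n N| <= (A ^+ 3 * 32 / N.+1%:R)%:C.
Proof.
move=> NN'; rewrite /partial_sum sum_zrange_sub //; under eq_bigr do rewrite big_mkcond /=.
pose w k : R := (N < absz k)%N%:R + N.+1%:R^-1.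
apply: le_trans (ler_norm_double_sum (fun k l => A ^+ 3 * (invz2 R k * invz2 R (k + l) * w k)) _) _.
  move=> k l _.
  have b_ge0 : 0 <= A ^+ 3 * (invz2 R k * invz2 R (k + l) * w k).
    by rewrite !mulr_ge0 ?exprn_ge0 ?coef_bound_ge0 ?invz2_ge0 ?addr_ge0 ?invr_ge0.
  case: ifP => [out | _]; last by rewrite normr0 ler0c.
  rewrite /cterm_excl; case: ifP => _; last by rewrite normr0 ler0c.
  apply: norm_cterm_le; rewrite /w; case: (ltnP N (absz k)) => Nk /=.
    by apply: le_trans (invz_le1 _ _) _; rewrite lerDl invr_ge0 ler0n.
  by rewrite add0r invz_tail //; move: out; rewrite Nk /= -ltnNge.
rewrite lecR; under eq_bigr => k _ do rewrite -mulr_sumr; rewrite -mulr_sumr -[leRHS]mulrA.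
rewrite ler_wpM2l ?exprn_ge0 ?coef_bound_ge0 //.
exact: invz2_convolution_tail_le (zrange_uniq N').
Qed.

End EvenCoefficients.

Section SequenceLimits.
Context {R : realType}.

Lemma exists_inv_succ_lt (K : R) [e : R] : 0 < e -> exists N : nat, K / N.+1%:R < e.
Proof.
move=> e0; exists (Num.truncn (`|K| / e)).
rewrite ltr_pdivrMr ?ltr0n // mulrC -ltr_pdivrMr //.
apply: le_lt_trans (truncnS_gt _); apply: ler_wpM2r; last exact: ler_norm.
by rewrite invr_ge0 ltW.
Qed.

Lemma cvg_of_dist_le_inv_succ (x : nat -> R) (K : R) :
  (forall N N', (N <= N')%N -> `|x N' - x N| <= K / N.+1%:R) -> cvg (x @ \oo).
Proof.
move=> xK; apply: cauchy_cvg; apply: cauchy_exP => e e0.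
have [N KN] := exists_inv_succ_lt K e0.
exists (x N), N => // m Nm; rewrite /ball /= distrC.
exact: le_lt_trans (xK _ _ Nm) KN.
Qed.

Lemma norm_lim_le (x : nat -> R) (b K : R) : cvg (x @ \oo) ->
  (forall N, `|x N| <= b + K / N.+1%:R) -> `|lim (x @ \oo)| <= b.
Proof.
move=> cx xb; have bK : (fun N : nat => b + K / N.+1%:R) @ \oo --> b.
  rewrite -[b in _ --> b]addr0 -(mulr0 K); apply: cvgD; first exact: cvg_cst.
  by apply: (@cvgM _ _ _ _ (fun=> K) harmonic); [exact: cvg_cst | exact: cvg_harmonic].
rewrite -subr_ge0; apply: (@cvgr_to_ge _ \oo _ _ _ _ _ (cvgB bK (cvg_norm cx))).
by apply: nearW => N; rewrite subr_ge0.
Qed.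

Lemma norm_Re_le (z : R[i]) (b : R) : `|z| <= b%:C -> `|complex.Re z| <= b.
Proof. by rewrite -lecR; apply: le_trans (normc_ge_Re z). Qed.

Lemma norm_Im_le (z : R[i]) (b : R) : `|z| <= b%:C -> `|complex.Im z| <= b.
Proof.
rewrite normc_def lecR => zb; apply: le_trans zb.
by rewrite -sqrtr_sqr ler_wsqrtr // lerDr sqr_ge0.
Qed.

Lemma norm_complex_le (a b : R) : `|a +i* b| <= (`|a| + `|b|)%:C.
Proof.
rewrite normc_def lecR /= -[leRHS]ger0_norm ?addr_ge0 // -sqrtr_sqr ler_wsqrtr //.
rewrite -[a ^+ 2]real_normK ?num_real // -[b ^+ 2]real_normK ?num_real //.
by have := normr_ge0 a; have := normr_ge0 b; nra.
Qed.

Lemma cvg_Re_Im_of_dist_le [z : nat -> R[i]] [K : R] :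
  (forall N N', (N <= N')%N -> `|z N' - z N| <= (K / N.+1%:R)%:C) ->
  cvg ((fun N => complex.Re (z N)) @ \oo) /\ cvg ((fun N => complex.Im (z N)) @ \oo).
Proof.
move=> zK; split; apply: (cvg_of_dist_le_inv_succ _ K) => N N' NN'; rewrite -raddfB.
- exact: norm_Re_le (zK _ _ NN').
- exact: norm_Im_le (zK _ _ NN').
Qed.

Lemma norm_lim_Re_Im_le [z : nat -> R[i]] [b K : R] :
  cvg ((fun N => complex.Re (z N)) @ \oo) -> cvg ((fun N => complex.Im (z N)) @ \oo) ->
  (forall N, `|z N| <= (b + K / N.+1%:R)%:C) ->
  `|lim ((fun N => complex.Re (z N)) @ \oo) +i* lim ((fun N => complex.Im (z N)) @ \oo)|
  <= (b + b)%:C.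
Proof.
move=> cRe cIm zb; apply: le_trans (norm_complex_le _ _) _; rewrite lecR.
by apply: lerD; apply: (norm_lim_le _ _ K) => // N; [apply: norm_Re_le | apply: norm_Im_le].
Qed.

End SequenceLimits.

Lemma CcoefN [R : realType] (qr qi : R -> R) k : Ccoef qr qi (- k) = Ccoef qr qi k.
Proof.
have cosN (f : R -> R) : (fun x => f x * cos ((- k)%:~R * x)) = (fun x => f x * cos (k%:~R * x)).
  by apply: funext => x; rewrite intrN mulNr cosN.
by rewrite /Ccoef !cosN.
Qed.

Lemma inv_bound_of_bigO [R : rcfType] [c : int -> R[i]] :
  c 0 = 0 -> (forall k, c (- k) = c k) ->
  (exists (M : R) (N0 : nat), forall n : nat, (N0 <= n)%N -> `|c n%:Z| <= (M / n%:R)%:C) ->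
  exists A : R, forall k, `|c k| <= (A * invz R k)%:C.
Proof.
move=> c0 cN [M [N0 cM]].
pose r (i : nat) := Num.sqrt (complex.Re (c i) ^+ 2 + complex.Im (c i) ^+ 2).
have r_ge0 i : 0 <= r i * i%:R by rewrite mulr_ge0 ?sqrtr_ge0.
exists (`|M| + \sum_(i < N0) r i * i%:R).
suff cA (n : nat) : `|c n| <= ((`|M| + \sum_(i < N0) r i * i%:R) * invz R n)%:C.
  move=> k; have [k0 | k0] := lerP 0 k.
    by rewrite [k](_ : _ = (absz k)%:Z) ?cA //; lia.
  by rewrite -cN -invzN [- k](_ : _ = (absz k)%:Z) ?cA //; lia.
have [-> | n0] := posnP n; first by rewrite c0 normr0 /invz invr0 mulr0.
have [N0n | nN0] := leqP N0 n.
  apply: le_trans (cM n N0n) _; rewrite lecR ler_wpM2r ?invr_ge0 ?ler0n //.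
  by rewrite (le_trans (ler_norm M)) // lerDl sumr_ge0.
rewrite normc_def lecR /invz /= ler_pdivlMr ?ltr0n //.
apply: (@le_trans _ _ (\sum_(i < N0) r i * i%:R)); last by rewrite lerDr.
by rewrite (bigD1 (Ordinal nN0)) //= lerDl sumr_ge0.
Qed.

Lemma big_ord_zrange (V : nmodType) N (F : int -> V) :
  \sum_(i < (2 * N).+1) F (i%:Z - N%:Z) = \sum_(k <- zrange N) F k.
Proof. by rewrite /zrange big_map -(big_mkord xpredT (fun i => F (i%:Z - N%:Z))). Qed.

Lemma S1_partialE [R : realType] (qr qi : R -> R) n N :
  S1_partial qr qi n N = partial_sum (Ccoef qr qi) n N.
Proof.
rewrite /S1_partial (big_ord_zrange _ _
  (fun k => \sum_(j < (2 * N).+1) S1_term qr qi n k (j%:Z - N%:Z))).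
by apply: eq_bigr => k _; rewrite (big_ord_zrange _ _ (S1_term qr qi n k)).
Qed.

Theorem proposition1 (R : realType) (qr qi : R -> R) :
  L1_0pi qr -> L1_0pi qi ->
  Ccoef qr qi 0 = 0 ->
  (* q in E : C_n = O(1/n) *)
  (exists (M : R) (N0 : nat), forall n : nat, (N0 <= n)%N ->
     `|Ccoef qr qi n%:Z| <= (M / n%:R)%:C) ->
  (* the double series defining S_1(n,q) converges for every n, and
     S_1(n,q) = O(n^-2) *)
  (forall n : nat,
     cvg ((fun N => (complex.Re (S1_partial qr qi n N) : R)) @ \oo) /\
     cvg ((fun N => (complex.Im (S1_partial qr qi n N) : R)) @ \oo)) /\
  (exists (M : R) (N0 : nat), forall n : nat, (N0 <= n)%N ->
     `|S1 qr qi n| <= (M / (n%:R ^+ 2))%:C).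
Proof.
move=> _ _ C0 CO; have cN := CcoefN qr qi.
have [A cA] := inv_bound_of_bigO C0 cN CO.
have cauchy n N N' : (N <= N')%N ->
    `|S1_partial qr qi n N' - S1_partial qr qi n N| <= (A ^+ 3 * 32 / N.+1%:R)%:C.
  by rewrite !S1_partialE; apply: norm_partial_sum_sub_le.
have cvgS n := cvg_Re_Im_of_dist_le (cauchy n).
split=> [n | ]; first exact: cvgS.
exists (4 * A ^+ 3), 1%N => n n1; have [cRe cIm] := cvgS n.
apply: le_trans (norm_lim_Re_Im_le cRe cIm _) _.
  by move=> N; rewrite S1_partialE; apply: (norm_partial_sum_le _ _ cN cA).
have n0 : n%:R != 0 :> R by rewrite pnatr_eq0 -lt0n.
rewrite lecR (_ : _ + _ = 4 * A ^+ 3 / n%:R ^+ 2) //.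
by rewrite /invz2 /invz /= natrM; field.
Qed.
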